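(* Let $M$ be a smooth $n$-manifold with a torsion-free linear connection $\nabla$ and a symmetric $(0,2)$-tensor field $c$, and let $\widetilde{\nabla}$ be the linear connection on $T^{\ast}M$ given in the adapted frame by $\widetilde{\nabla}_{E_{\overline{i}}}E_{\overline{j}}=0$, $\widetilde{\nabla}_{E_{\overline{i}}}E_{j}=0$, $\widetilde{\nabla}_{E_{i}}E_{\overline{j}}=-\Gamma^{j}_{ih}E_{\overline{h}}$, $\widetilde{\nabla}_{E_{i}}E_{j}=\Gamma^{h}_{ij}E_{h}+\tfrac12(\nabla_i c_{jh}+\nabla_j c_{ih}-\nabla_h c_{ij})E_{\overline{h}}$. Then the curvature tensor $\widetilde R(X,Y)Z=\widetilde\nabla_X\widetilde\nabla_YZ-\widetilde\nabla_Y\widetilde\nabla_XZ-\widetilde\nabla_{[X,Y]}Z$ of $\widetilde\nabla$ satisfies $$\widetilde R(E_i,E_j)E_k=R_{ijk}^{\ \ \ h}E_h+\tfrac12\Big\{\nabla_i(\nabla_kc_{jh}-\nabla_hc_{jk})-\nabla_j(\nabla_kc_{ih}-\nabla_hc_{ik})-R_{ijk}^{\ \ \ m}c_{mh}-R_{ijh}^{\ \ \ m}c_{km}\Big\}E_{\overline h},$$ $$\widetilde R(E_i,E_j)E_{\overline k}=R_{jih}^{\ \ \ k}E_{\overline h},$$ and $\widetilde R(E_i,E_{\overline j})E_k=\widetilde R(E_i,E_{\overline j})E_{\overline k}=\widetilde R(E_{\overline i},E_j)E_k=\widetilde R(E_{\overline i},E_j)E_{\overline k}=\widetilde R(E_{\overline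 i},E_{\overline j})E_k=\widetilde R(E_{\overline i},E_{\overline j})E_{\overline k}=0$.
   Context: Summation convention; $\overline{i}=n+i$. $\Gamma^h_{ij}$ are the coefficients of $\nabla$ in local coordinates $(x^i)$; the curvature of $\nabla$ is $R(X,Y)=\nabla_X\nabla_Y-\nabla_Y\nabla_X-\nabla_{[X,Y]}$ with $R(\partial_i,\partial_j)\partial_k=R_{ijk}^{\ \ \ h}\partial_h$. $\nabla_ic_{jk}$ are the components of $\nabla c$ and $\nabla_i(\nabla_kc_{jh})$ those of $\nabla\nabla c$. On $T^{\ast}M$ use induced coordinates $(x^i,p_i)$, $\partial_{\overline i}=\partial/\partial p_i$, and the adapted frame $E_j=\partial_j+p_a\Gamma^a_{hj}\partial_{\overline h}$, $E_{\overline j}=\partial_{\overline j}$. *)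

(* Local-coordinate formalization: the chart domain is an open set U of R^n
   (points are row vectors 'rV[R]_n); T*U is the open set of points
   z : 'rV[R]_(n+n) with base x = lsubmx z in U and fibre p = rsubmx z.
   Index i of x^i is (lshift n i), index \bar i = n+i is (rshift n i). *)
From HB Require Import structures.
From mathcomp Require Import all_boot all_order all_algebra.
From mathcomp Require Import all_classical all_reals all_analysis.
Set Implicit Arguments. Unset Strict Implicit. Unset Printing Implicit Defensive.
Import Order.TTheory GRing.Theory Num.Theory.
Import numFieldNormedType.Exports.
Local Open Scope classical_set_scope.
Local Open Scope ring_scope.

Section Defs.
Variable R : realType.

Definition pd (m : nat) (i : 'I_m) (f : 'rV[R]_m -> R) (x : 'rV[R]_m) : R :=
  derive f x (delta_mx 0 i).

Fixpoint Ck (m k : nat) (U : set 'rV[R]_m) (f : 'rV[R]_m -> R) : Prop :=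
  match k with
  | 0 => forall x, U x -> {for x, continuous f}
  | k'.+1 => (forall x, U x -> differentiable f x) /\
             (forall i : 'I_m, Ck k' U (pd i f))
  end.
Definition smooth (m : nat) (U : set 'rV[R]_m) (f : 'rV[R]_m -> R) : Prop :=
  forall k, Ck k U f.

Definition vfield (m : nat) := 'rV[R]_m -> 'rV[R]_m.

Definition vder (m : nat) (X : vfield m) (f : 'rV[R]_m -> R) (x : 'rV[R]_m) : R :=
  \sum_(A < m) X x 0 A * pd A f x.

Definition lie (m : nat) (X Y : vfield m) : vfield m := fun x =>
  \row_(C < m) (vder X (fun y => Y y 0 C) x - vder Y (fun y => X y 0 C) x).

(* A frame is a matrix field F whose row a is the coordinate expression of E_a.
   A linear connection is given by its coefficients in the frame:
     nabla_{E_a} E_b = \sum_c Om a b c E_c. *)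
Definition frame_comp (m : nat) (F : 'rV[R]_m -> 'M[R]_m) (V : vfield m) :
  'rV[R]_m -> 'rV[R]_m := fun x => V x *m invmx (F x).

Definition cov (m : nat) (F : 'rV[R]_m -> 'M[R]_m)
    (Om : 'I_m -> 'I_m -> 'I_m -> 'rV[R]_m -> R) (X Y : vfield m) : vfield m :=
  fun x =>
    \sum_(b < m) vder X (fun y => frame_comp F Y y 0 b) x *: row b (F x)
  + \sum_(a < m) \sum_(b < m) \sum_(c < m)
      (frame_comp F X x 0 a * frame_comp F Y x 0 b * Om a b c x) *: row c (F x).

Definition curv (m : nat) (F : 'rV[R]_m -> 'M[R]_m)
    (Om : 'I_m -> 'I_m -> 'I_m -> 'rV[R]_m -> R) (X Y Z : vfield m) : vfield m :=
  fun x => cov F Om X (cov F Om Y Z) x - cov F Om Y (cov F Om X Z) x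
           - cov F Om (lie X Y) Z x.

(* ---- data on the base: Gam h i j = Gamma^h_{ij}, c i j = c_{ij} ---- *)

Definition dvec (n : nat) (i : 'I_n) : vfield n := fun _ => delta_mx 0 i.

(* R_{ijk}^h, defined by R(d_i,d_j)d_k = R_{ijk}^h d_h, where
   nabla_{d_i} d_j = Gamma^h_{ij} d_h *)
Definition Rcomp (n : nat) (Gam : 'I_n -> 'I_n -> 'I_n -> 'rV[R]_n -> R)
    (i j k h : 'I_n) (x : 'rV[R]_n) : R :=
  curv (fun _ => 1%:M) (fun a b c => Gam c a b) (dvec i) (dvec j) (dvec k) x 0 h.

Definition covc (n : nat) (Gam : 'I_n -> 'I_n -> 'I_n -> 'rV[R]_n -> R)
    (c : 'I_n -> 'I_n -> 'rV[R]_n -> R) (i j k : 'I_n) (x : 'rV[R]_n) : R :=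
  pd i (c j k) x - \sum_(m < n) (Gam m i j x * c m k x + Gam m i k x * c j m x).

Definition covcc (n : nat) (Gam : 'I_n -> 'I_n -> 'I_n -> 'rV[R]_n -> R)
    (c : 'I_n -> 'I_n -> 'rV[R]_n -> R) (i k j h : 'I_n) (x : 'rV[R]_n) : R :=
  pd i (covc Gam c k j h) x
  - \sum_(m < n) (Gam m i k x * covc Gam c m j h x
                  + Gam m i j x * covc Gam c k m h x
                  + Gam m i h x * covc Gam c k j m x).

(* adapted frame: E_j = d_j + p_a Gamma^a_{hj} d_{\bar h}, E_{\bar j} = d_{\bar j} *)
Definition adapted (n : nat) (Gam : 'I_n -> 'I_n -> 'I_n -> 'rV[R]_n -> R)
    (z : 'rV[R]_(n + n)) : 'M[R]_(n + n) :=
  block_mx 1%:M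
    (\matrix_(j < n, h < n) \sum_(a < n) rsubmx z 0 a * Gam a h j (lsubmx z))
    0 1%:M.

Definition Efield (n : nat) (Gam : 'I_n -> 'I_n -> 'I_n -> 'rV[R]_n -> R)
    (a : 'I_(n + n)) : vfield (n + n) := fun z => row a (adapted Gam z).

Definition Omt (n : nat) (Gam : 'I_n -> 'I_n -> 'I_n -> 'rV[R]_n -> R)
    (c : 'I_n -> 'I_n -> 'rV[R]_n -> R) (a b d : 'I_(n + n)) (z : 'rV[R]_(n + n)) : R :=
  let x := lsubmx z in
  match fintype.split a, fintype.split b, fintype.split d with
  | inr _, _, _ => 0
  | inl i, inr j, inr h => - Gam j i h x
  | inl _, inr _, inl _ => 0
  | inl i, inl j, inl h => Gam h i j x
  | inl i, inl j, inr h =>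
      2^-1 * (covc Gam c i j h x + covc Gam c j i h x - covc Gam c h i j x)
  end.

Definition Rt (n : nat) (Gam : 'I_n -> 'I_n -> 'I_n -> 'rV[R]_n -> R)
    (c : 'I_n -> 'I_n -> 'rV[R]_n -> R) (X Y Z : vfield (n + n)) : vfield (n + n) :=
  curv (adapted Gam) (Omt Gam c) X Y Z.

End Defs.

(* Every connection coefficient Om_ab^d of the lift depends on the base point only,
   so the vertical fields E_ibar kill them and the horizontal fields E_i act on them
   as the coordinate derivatives d_i of the base.  In the frame formula
     R(E_a,E_b)E_k = (E_a Om_bk^d - E_b Om_ak^d + Om_bk^e Om_ae^d - Om_ak^e Om_be^d) E_d
                     - nabla_[E_a,E_b] E_k
   the last term vanishes: the horizontal parts of the E_a are constant, so their
   brackets are vertical, and nabla_(E_ibar) = 0.  The horizontal and the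
   vertical-on-vertical components are then R_ijk^h and R_jih^k by inspection.  The
   vertical component of R(E_i,E_j)E_k is nabla_i C_jkh - nabla_j C_ikh, where
   C_jkh = (nabla_j c_kh + nabla_k c_jh - nabla_h c_jk)/2; expanding nabla C and
   applying the Ricci identity for nabla nabla c (torsion-freeness and Schwarz's
   theorem for the second partials of c) gives the stated formula. *)

From HB Require Import structures.
From mathcomp Require Import all_boot all_order all_algebra.
From mathcomp Require Import all_classical all_reals all_analysis.
From mathcomp Require Import ring lra.
Import Order.TTheory GRing.Theory Num.Theory.
Import numFieldNormedType.Exports.
Local Open Scope classical_set_scope.
Local Open Scope ring_scope.
Set Implicit Arguments. Unset Strict Implicit. Unset Printing Implicit Defensive.

Lemma vder_cst (R : realType) (m : nat) (X : vfield R m) (r : R) y :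
  vder X (fun _ => r) y = 0.
Proof. by rewrite /vder big1 // => A _; rewrite /pd derive_cst mulr0. Qed.

Lemma vder_eq0 (R : realType) (m : nat) (X : vfield R m) f y :
  X y = 0 -> vder X f y = 0.
Proof. by move=> X0; rewrite /vder big1 // => A _; rewrite X0 mxE mul0r. Qed.

Lemma cov_eq0 (R : realType) (m : nat) F Om (X Y : vfield R m) y :
  X y = 0 -> cov F Om X Y y = 0.
Proof.
move=> X0; rewrite /cov big1 ?add0r => [|b _]; last by rewrite vder_eq0 ?scale0r.
apply: big1 => a _; apply: big1 => b _; apply: big1 => e _.
by rewrite /frame_comp X0 mul0mx mxE !mul0r scale0r.
Qed.

Lemma delta_mx_row (R : realType) (m : nat) (a b : 'I_m) :
  (delta_mx 0 a : 'rV[R]_m) 0 b = (b == a)%:R.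
Proof. by rewrite mxE eqxx. Qed.

Section FrameCurvature.
Variables (R : realType) (m : nat) (F : 'rV[R]_m -> 'M[R]_m).
Variable Om : 'I_m -> 'I_m -> 'I_m -> 'rV[R]_m -> R.
Hypothesis F_unit : forall y, F y \in unitmx.

Definition frame_vec (a : 'I_m) : vfield R m := fun y => row a (F y).

Definition frame_sum (g : 'I_m -> 'rV[R]_m -> R) : vfield R m :=
  fun y => \sum_b g b y *: row b (F y).

Lemma frame_comp_sum g y : frame_comp F (frame_sum g) y = \row_b g b y.
Proof.
rewrite /frame_comp; have -> : frame_sum g y = (\row_b g b y) *m F y.
  by rewrite mulmx_sum_row; apply: eq_bigr => b _; rewrite mxE.
by rewrite mulmxK.
Qed.

Lemma frame_comp_vec a y : frame_comp F (frame_vec a) y = delta_mx 0 a.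
Proof. by rewrite /frame_comp /frame_vec rowE mulmxK. Qed.

Lemma cov_frame_vec (X : vfield R m) k y : cov F Om X (frame_vec k) y =
  \sum_a \sum_c (frame_comp F X y 0 a * Om a k c y) *: row c (F y).
Proof.
rewrite /cov big1 ?add0r; last first.
  by move=> b _; under eq_fun do rewrite frame_comp_vec; rewrite vder_cst scale0r.
apply: eq_bigr => a _; rewrite (bigD1 k) //= [X in _ + X]big1 ?addr0.
  by apply: eq_bigr => c _; rewrite frame_comp_vec delta_mx_row eqxx mulr1.
move=> b /negbTE nbk; apply: big1 => c _.
by rewrite frame_comp_vec delta_mx_row nbk mulr0 mul0r scale0r.
Qed.

Lemma cov_frame_vec_vec a k : cov F Om (frame_vec a) (frame_vec k) = frame_sum (Om a k).
Proof.
apply: funext => y; rewrite cov_frame_vec (bigD1 a) //= [X in _ + X]big1 ?addr0.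
  by apply: eq_bigr => c _; rewrite frame_comp_vec delta_mx_row eqxx mul1r.
move=> b /negbTE nba; apply: big1 => c _.
by rewrite frame_comp_vec delta_mx_row nba mul0r scale0r.
Qed.

Lemma cov_frame_vec_sum a g y : cov F Om (frame_vec a) (frame_sum g) y =
  \sum_c (vder (frame_vec a) (g c) y + \sum_b g b y * Om a b c y) *: row c (F y).
Proof.
rewrite /cov; under eq_bigr do under eq_fun do rewrite frame_comp_sum mxE.
rewrite [X in _ + X](bigD1 a) //= [X in _ + (_ + X)]big1 ?addr0; last first.
  move=> b /negbTE nba; apply: big1 => b' _; apply: big1 => c _.
  by rewrite frame_comp_vec delta_mx_row nba !mul0r scale0r.
rewrite exchange_big -big_split /=; apply: eq_bigr => c _.
rewrite scalerDl; congr (_ + _); rewrite scaler_suml; apply: eq_bigr => b _.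
by rewrite frame_comp_vec frame_comp_sum delta_mx_row mxE eqxx mul1r.
Qed.

Lemma curv_frame_vec a b k y : curv F Om (frame_vec a) (frame_vec b) (frame_vec k) y =
  \sum_d (vder (frame_vec a) (Om b k d) y - vder (frame_vec b) (Om a k d) y
     + \sum_e (Om b k e y * Om a e d y - Om a k e y * Om b e d y)) *: row d (F y)
  - cov F Om (lie (frame_vec a) (frame_vec b)) (frame_vec k) y.
Proof.
rewrite /curv !cov_frame_vec_vec !cov_frame_vec_sum -sumrB; congr (_ - _).
by apply: eq_bigr => d _; rewrite -scalerBl sumrB opprD addrACA.
Qed.

End FrameCurvature.

Lemma dvec_frame_vec (R : realType) (m : nat) (a : 'I_m) :
  dvec a = frame_vec (fun _ : 'rV[R]_m => 1%:M) a.
Proof. by apply: funext => y; rewrite /frame_vec row1. Qed.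

Lemma vder_dvec (R : realType) (m : nat) (a : 'I_m) (f : 'rV[R]_m -> R) y :
  vder (dvec a) f y = pd a f y.
Proof.
rewrite /vder (bigD1 a) //= big1 ?addr0; first by rewrite mxE !eqxx mul1r.
by move=> b /negbTE nba; rewrite mxE nba andbF mul0r.
Qed.

Lemma lie_dvec (R : realType) (m : nat) (a b : 'I_m) (y : 'rV[R]_m) :
  lie (dvec a) (dvec b) y = 0.
Proof.
apply/rowP => j; rewrite !mxE.
have := vder_cst (dvec a) ((delta_mx 0 b : 'rV[R]_m) 0 j) y.
have := vder_cst (dvec b) ((delta_mx 0 a : 'rV[R]_m) 0 j) y.
move=> /= -> ->; rewrite subrr; exact/esym/mxE.
Qed.

Lemma sum_scale_row1 (R : pzRingType) (m : nat) (g : 'I_m -> R) h :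
  (\sum_d g d *: row d (1%:M : 'M[R]_m)) 0 h = g h.
Proof.
under eq_bigr do rewrite row1.
have <- : \row_d g d = \sum_d g d *: delta_mx 0 d.
  by rewrite [LHS]row_sum_delta; apply: eq_bigr => d _; rewrite mxE.
by rewrite mxE.
Qed.

Lemma RcompE (R : realType) (n : nat) (Gam : 'I_n -> 'I_n -> 'I_n -> 'rV[R]_n -> R)
    i j k h x :
  Rcomp Gam i j k h x = pd i (Gam h j k) x - pd j (Gam h i k) x
    + \sum_e (Gam e j k x * Gam h i e x - Gam e i k x * Gam h j e x).
Proof.
rewrite /Rcomp !dvec_frame_vec curv_frame_vec; last by move=> _; exact: unitmx1.
rewrite cov_eq0 ?subr0; last by rewrite -!dvec_frame_vec lie_dvec.
by rewrite sum_scale_row1 -!dvec_frame_vec !vder_dvec.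
Qed.

Lemma is_derive_line (R : realType) (n : nat) (f : 'rV[R]_n -> R) (a v : 'rV[R]_n) (s : R) :
  derivable f (a + s *: v) v ->
  is_derive s 1 (fun t : R => f (a + t *: v)) (derive f (a + s *: v) v).
Proof.
have quotE : (fun h : R => h^-1 *: (((fun t : R => f (a + t *: v)) \o shift s) (h *: 1)
                                   - f (a + s *: v)))
    = fun h : R => h^-1 *: ((f \o shift (a + s *: v)) (h *: v) - f (a + s *: v)).
  apply: funext => h /=; congr (_ *: (f _ - _)).
  by rewrite [h *: 1]mulr1 scalerDl addrCA.
move=> df; apply: DeriveDef; first by rewrite /derivable quotE.
by rewrite /derive quotE.
Qed.

Lemma mvt_segment (R : realType) (g dg : R -> R) (h : R) : 0 < h ->
  (forall s, 0 <= s <= h -> is_derive s 1 g (dg s)) ->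
  exists2 s, 0 <= s <= h & g h - g 0 = h * dg s.
Proof.
move=> h0 Dg.
have itvW s : s \in `]0, h[ -> 0 <= s <= h.
  by rewrite in_itv /= => /andP[s0 sh]; rewrite !ltW.
have cg : {within `[0, h], continuous g}.
  apply: derivable_within_continuous => s; rewrite in_itv /= => hs.
  by case: (Dg s hs).
have [s hs ->] := MVT h0 (fun s hs => Dg s (itvW s hs)) cg.
by exists s; [exact: itvW | rewrite subr0 mulrC].
Qed.

Lemma second_difference_mvt (R : realType) (n : nat) (f : 'rV[R]_n -> R)
    (y e1 e2 : 'rV[R]_n) (h : R) :
  0 < h ->
  (forall s t, 0 <= s <= h -> 0 <= t <= h ->
     differentiable f (y + s *: e1 + t *: e2) /\
     differentiable (fun w => derive f w e1) (y + s *: e1 + t *: e2)) ->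
  exists s t, [/\ 0 <= s <= h, 0 <= t <= h &
    f (y + h *: e1 + h *: e2) - f (y + h *: e1) - f (y + h *: e2) + f y
      = h * h * derive (fun w => derive f w e1) (y + s *: e1 + t *: e2) e2].
Proof.
move=> h0 df.
have hh : 0 <= h <= h by apply/andP; split; lra.
have h00 : (0 : R) <= 0 <= h by apply/andP; split; lra.
have swapE s t : y + t *: e2 + s *: e1 = y + s *: e1 + t *: e2 by rewrite addrAC.
have t0E s : y + s *: e1 = y + s *: e1 + 0 *: e2 by rewrite scale0r addr0.
pose g1 w := derive f w e1.
pose phi := (fun s => f (y + h *: e2 + s *: e1)) - (fun s => f (y + s *: e1)).
pose dphi s := g1 (y + h *: e2 + s *: e1) - g1 (y + s *: e1).
have Dphi s : 0 <= s <= h -> is_derive s 1 phi (dphi s).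
  move=> hs; apply: is_deriveB; apply: is_derive_line.
    by apply: diff_derivable; rewrite swapE; case: (df s h hs hh).
  by apply: diff_derivable; rewrite t0E; case: (df s 0 hs h00).
have [s hs Ephi] := mvt_segment h0 Dphi.
pose psi t := g1 (y + s *: e1 + t *: e2).
pose dpsi t := derive g1 (y + s *: e1 + t *: e2) e2.
have Dpsi t : 0 <= t <= h -> is_derive t 1 psi (dpsi t).
  by move=> ht; apply: is_derive_line; apply: diff_derivable; case: (df s t hs ht).
have [t ht Epsi] := mvt_segment h0 Dpsi.
exists s, t; split => //.
have dphiE : dphi s = psi h - psi 0 by rewrite /dphi /psi swapE -t0E.
have second_diffE : f (y + h *: e1 + h *: e2) - f (y + h *: e1) - f (y + h *: e2) + f y
    = phi h - phi 0.
  have -> : phi h - phi 0 = f (y + h *: e2 + h *: e1) - f (y + h *: e1)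
                           - (f (y + h *: e2 + 0 *: e1) - f (y + 0 *: e1)) by [].
  by rewrite !scale0r !addr0 swapE opprB addrA addrAC.
by rewrite second_diffE Ephi dphiE Epsi mulrA.
Qed.

Lemma ball_two_steps (R : realType) (n : nat) (x u w : 'rV[R]_n) (r : R) : 0 < r ->
  exists2 h : R, 0 < h &
    forall s t, 0 <= s <= h -> 0 <= t <= h -> ball x r (x + s *: u + t *: w).
Proof.
move=> r0; pose M := `|u| + `|w| + 1.
have M0 : 0 < M by rewrite /M ltr_wpDl // addr_ge0.
exists (r / M) => [|s t /andP[s0 sh] /andP[t0 th]]; first exact: divr_gt0.
rewrite -ball_normE /= -addrA opprD addrA subrr sub0r normrN.
apply: le_lt_trans (ler_normD _ _) _; rewrite !normrZ (ger0_norm s0) (ger0_norm t0).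
have le_uw : s * `|u| + t * `|w| <= r / M * (`|u| + `|w|).
  by rewrite mulrDr lerD // ler_wpM2r.
apply: le_lt_trans le_uw _.
by rewrite -[X in _ < X](divfK (lt0r_neq0 M0)) ltr_pM2l ?divr_gt0 // /M ltrDl.
Qed.

Lemma schwarz (R : realType) (n : nat) (U : set 'rV[R]_n) (f : 'rV[R]_n -> R)
    (x : 'rV[R]_n) (i j : 'I_n) :
  open U -> U x -> (forall y, U y -> differentiable f y) ->
  (forall l y, U y -> differentiable (pd l f) y) ->
  {for x, continuous (pd j (pd i f))} -> {for x, continuous (pd i (pd j f))} ->
  pd j (pd i f) x = pd i (pd j f) x.
Proof.
move=> oU Ux df dpf cji cij.
apply/eqP; rewrite -subr_eq0 -normr_le0; apply/ler_addgt0Pr => e e0; rewrite add0r.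
have e2 : 0 < e / 2 by rewrite divr_gt0.
have [r r0 near_x] : exists2 r : R, 0 < r & forall y, ball x r y ->
    [/\ U y, `|pd j (pd i f) x - pd j (pd i f) y| < e / 2
          & `|pd i (pd j f) x - pd i (pd j f) y| < e / 2].
  have nearU : nbhs x U by apply: open_nbhs_nbhs; split.
  have near_ji : \forall y \near x, `|pd j (pd i f) x - pd j (pd i f) y| < e / 2.
    by move/cvgrPdist_lt: cji; apply.
  have near_ij : \forall y \near x, `|pd i (pd j f) x - pd i (pd j f) y| < e / 2.
    by move/cvgrPdist_lt: cij; apply.
  have [r r0 Hr] := (nbhs_ballP x _).1 (filterI nearU (filterI near_ji near_ij)).
  by exists r => // y /Hr[? []].
pose ei : 'rV[R]_n := delta_mx 0 i; pose ej : 'rV[R]_n := delta_mx 0 j.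
have [h h0 in_ball] := ball_two_steps x ei ej r0.
have in_ball' s t : 0 <= s <= h -> 0 <= t <= h -> ball x r (x + s *: ej + t *: ei).
  by move=> hs ht; rewrite addrAC; exact: in_ball.
have [s1 [t1 [hs1 ht1 D1]]] := @second_difference_mvt R n f x ei ej h h0
  (fun s t hs ht => let: And3 Up _ _ := near_x _ (in_ball s t hs ht) in
                    conj (df _ Up) (dpf i _ Up)).
have [s2 [t2 [hs2 ht2 D2]]] := @second_difference_mvt R n f x ej ei h h0
  (fun s t hs ht => let: And3 Up _ _ := near_x _ (in_ball' s t hs ht) in
                    conj (df _ Up) (dpf j _ Up)).
have same_mixed : pd j (pd i f) (x + s1 *: ei + t1 *: ej)
                = pd i (pd j f) (x + s2 *: ej + t2 *: ei).
  apply: (mulfI (mulf_neq0 (lt0r_neq0 h0) (lt0r_neq0 h0))).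
  rewrite -[LHS]D1 -[RHS]D2 [x + h *: ej + h *: ei]addrAC.
  by congr (_ + _); exact: addrAC.
have [_ near1 _] := near_x _ (in_ball s1 t1 hs1 ht1).
have [_ _ near2] := near_x _ (in_ball' s2 t2 hs2 ht2).
rewrite same_mixed in near1.
set d := pd i (pd j f) _ in near1 near2.
have -> : pd j (pd i f) x - pd i (pd j f) x
        = (pd j (pd i f) x - d) - (pd i (pd j f) x - d) by rewrite opprB addrA subrK.
rewrite [X in _ <= X](splitr e); apply: le_trans (ler_normB _ _) _.
exact: ltW (ltrD near1 near2).
Qed.

Lemma pdN (R : realType) (n : nat) (f : 'rV[R]_n -> R) l x :
  derivable f x (delta_mx 0 l) -> pd l (fun y => - f y) x = - pd l f x.
Proof. by move=> df; rewrite /pd -deriveN. Qed.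

Section Smooth.
Variables (R : realType) (n : nat) (U : set 'rV[R]_n) (f : 'rV[R]_n -> R).
Hypothesis f_smooth : smooth U f.

Lemma smooth_pd l : smooth U (pd l f).
Proof. by move=> k; exact: (f_smooth k.+1).2. Qed.

Lemma smooth_differentiable x : U x -> differentiable f x.
Proof. by move=> Ux; exact: (f_smooth 1).1. Qed.

Lemma smooth_derivable x l : U x -> derivable f x (delta_mx 0 l).
Proof. by move=> Ux; apply: diff_derivable; exact: smooth_differentiable. Qed.

End Smooth.

Lemma smooth_pd_comm (R : realType) (n : nat) (U : set 'rV[R]_n) (f : 'rV[R]_n -> R)
    x a l :
  open U -> smooth U f -> U x -> pd l (pd a f) x = pd a (pd l f) x.
Proof.
move=> oU sf Ux; apply: (schwarz oU Ux) => [y Uy|l' y Uy||].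
- exact: smooth_differentiable sf _ Uy.
- exact: smooth_differentiable (smooth_pd sf l') _ Uy.
- exact/differentiable_continuous/(smooth_differentiable (smooth_pd (smooth_pd sf a) l) Ux).
- exact/differentiable_continuous/(smooth_differentiable (smooth_pd (smooth_pd sf l) a) Ux).
Qed.

Section CovariantDerivatives.
Variables (R : realType) (n : nat) (Gam : 'I_n -> 'I_n -> 'I_n -> 'rV[R]_n -> R)
  (c : 'I_n -> 'I_n -> 'rV[R]_n -> R).

Definition cov3 (T : 'I_n -> 'I_n -> 'I_n -> 'rV[R]_n -> R) (i a b d : 'I_n)
    (x : 'rV[R]_n) : R :=
  pd i (T a b d) x
  - \sum_m (Gam m i a x * T m b d x + Gam m i b x * T a m d x + Gam m i d x * T a b m x).

(* The coefficient of [E_hbar] in the lifted connection [nabla_{E_i} E_j]. *)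
Definition christoffel_c (i j h : 'I_n) (x : 'rV[R]_n) : R :=
  2^-1 * (covc Gam c i j h x + covc Gam c j i h x - covc Gam c h i j x).

Lemma covcE a b d : covc Gam c a b d =
  pd a (c b d) - \sum_m (Gam m a b * c m d + Gam m a d * c b m).
Proof. by apply: funext => y; rewrite /covc fct_sumE. Qed.

Variable x : 'rV[R]_n.
Hypothesis dGam : forall m a b l, derivable (Gam m a b) x (delta_mx 0 l).
Hypothesis dc : forall a b l, derivable (c a b) x (delta_mx 0 l).
Hypothesis ddc : forall a b e l, derivable (pd a (c b e)) x (delta_mx 0 l).

Lemma derivable_covc a b d l : derivable (covc Gam c a b d) x (delta_mx 0 l).
Proof.
rewrite covcE; apply: derivableB; first exact: ddc.
by apply: derivable_sum => m; apply: derivableD; exact: derivableM.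
Qed.

Lemma pd_covcE l a b e : pd l (covc Gam c a b e) x =
  pd l (pd a (c b e)) x - \sum_m pd l (Gam m a b) x * c m e x
  - \sum_m Gam m a b x * pd l (c m e) x - \sum_m pd l (Gam m a e) x * c b m x
  - \sum_m Gam m a e x * pd l (c b m) x.
Proof.
rewrite /pd covcE deriveB; last 2 first.
- exact: ddc.
- by apply: derivable_sum => m; apply: derivableD; exact: derivableM.
rewrite derive_sum; last by move=> m; apply: derivableD; exact: derivableM.
rewrite -!addrA; congr (_ + _); rewrite -!sumrN -!big_split /=.
apply: eq_bigr => m _.
rewrite deriveD ?deriveM //; try exact: derivableM.
have scaleE (u v : R) : u *: v = u * v by [].
by rewrite !scaleE; ring.
Qed.

Lemma pd_christoffel_c l i j h : pd l (christoffel_c i j h) x =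
  2^-1 * (pd l (covc Gam c i j h) x + pd l (covc Gam c j i h) x - pd l (covc Gam c h i j) x).
Proof.
have -> : christoffel_c i j h
    = 2^-1 \*o (covc Gam c i j h + covc Gam c j i h - covc Gam c h i j) by [].
rewrite /pd deriveMl; last by apply: derivableB; [apply: derivableD|]; exact: derivable_covc.
rewrite deriveB; [|by apply: derivableD; exact: derivable_covc|exact: derivable_covc].
by rewrite deriveD //; exact: derivable_covc.
Qed.

Lemma cov3_christoffel_c i j k h : cov3 christoffel_c i j k h x =
  2^-1 * (covcc Gam c i j k h x + covcc Gam c i k j h x - covcc Gam c i h j k x).
Proof.
rewrite /cov3 pd_christoffel_c /covcc.
have -> : \sum_(m < n) (Gam m i j x * christoffel_c m k h x
                        + Gam m i k x * christoffel_c j m h x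
                        + Gam m i h x * christoffel_c j k m x)
  = 2^-1 * (\sum_(m < n) (Gam m i j x * covc Gam c m k h x
                          + Gam m i k x * covc Gam c j m h x
                          + Gam m i h x * covc Gam c j k m x)
          + \sum_(m < n) (Gam m i k x * covc Gam c m j h x
                          + Gam m i j x * covc Gam c k m h x
                          + Gam m i h x * covc Gam c k j m x)
          - \sum_(m < n) (Gam m i h x * covc Gam c m j k x
                          + Gam m i j x * covc Gam c h m k x
                          + Gam m i k x * covc Gam c h j m x)).
  rewrite -big_split /= -sumrB mulr_sumr; apply: eq_bigr => m _.
  by rewrite /christoffel_c; ring.
ring.
Qed.

Hypothesis Gam_sym : forall m a b, Gam m a b x = Gam m b a x.

Lemma cov3_skew T i j k h :
  cov3 T i j k h x - cov3 T j i k h x =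
  pd i (T j k h) x - pd j (T i k h) x
  + (\sum_(s < n) (Gam s j k x * T i s h x - Gam s i k x * T j s h x)
     + \sum_(s < n) (T j k s x * - Gam s i h x - T i k s x * - Gam s j h x)).
Proof.
have rearrange (a b s1 s2 : R) : (a - s1) - (b - s2) = a - b + (s2 - s1) by ring.
rewrite /cov3 rearrange -sumrB -big_split /=; congr (_ + _).
by apply: eq_bigr => s _; rewrite (Gam_sym s j i); ring.
Qed.

Lemma sum_mul_covcE (g : 'I_n -> R) (a b d : 'I_n -> 'I_n) :
  \sum_m g m * covc Gam c (a m) (b m) (d m) x =
  \sum_m g m * pd (a m) (c (b m) (d m)) x
  - \sum_m \sum_s g m * Gam s (a m) (b m) x * c s (d m) x
  - \sum_m \sum_s g m * Gam s (a m) (d m) x * c (b m) s x.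
Proof.
rewrite -!sumrB; apply: eq_bigr => m _.
rewrite /covc mulrBr mulr_sumr -!addrA; congr (_ + _).
by rewrite -!sumrN -big_split /=; apply: eq_bigr => s _; ring.
Qed.

Lemma sum_Rcomp_mulE i j k (g : 'I_n -> R) :
  \sum_m Rcomp Gam i j k m x * g m =
  \sum_m pd i (Gam m j k) x * g m - \sum_m pd j (Gam m i k) x * g m
  + \sum_m \sum_s Gam s j k x * Gam m i s x * g m
  - \sum_m \sum_s Gam s i k x * Gam m j s x * g m.
Proof.
rewrite -sumrB -big_split -sumrB /=; apply: eq_bigr => m _.
rewrite RcompE mulrDl mulr_suml -!addrA -sumrB mulrBl -addrA; congr (_ + (_ + _)).
by apply: eq_bigr => s _; ring.
Qed.

Hypothesis pd_c_comm : forall a b e l, pd l (pd a (c b e)) x = pd a (pd l (c b e)) x.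

Lemma ricci_identity i j k h :
  covcc Gam c i j k h x - covcc Gam c j i k h x
  = - \sum_m Rcomp Gam i j k m x * c m h x - \sum_m Rcomp Gam i j h m x * c k m x.
Proof.
rewrite (sum_Rcomp_mulE i j k (fun m => c m h x)) (sum_Rcomp_mulE i j h (fun m => c k m x)).
rewrite /covcc !pd_covcE !big_split /=.
have -> : \sum_m Gam m j i x * covc Gam c m k h x = \sum_m Gam m i j x * covc Gam c m k h x.
  by apply: eq_bigr => m _; rewrite Gam_sym.
rewrite (sum_mul_covcE (fun m => Gam m i k x) (fun _ => j) id (fun _ => h)).
rewrite (sum_mul_covcE (fun m => Gam m i h x) (fun _ => j) (fun _ => k) id).
rewrite (sum_mul_covcE (fun m => Gam m j k x) (fun _ => i) id (fun _ => h)).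
rewrite (sum_mul_covcE (fun m => Gam m j h x) (fun _ => i) (fun _ => k) id) /=.
have swap (f : 'I_n -> 'I_n -> R) : \sum_m \sum_s f m s = \sum_m \sum_s f s m.
  exact: exchange_big.
rewrite (swap (fun m s => Gam m i k x * Gam s j m x * c s h x))
        (swap (fun m s => Gam m i h x * Gam s j m x * c k s x))
        (swap (fun m s => Gam m j k x * Gam s i m x * c s h x))
        (swap (fun m s => Gam m j h x * Gam s i m x * c k s x)) /=.
have -> : \sum_m \sum_s Gam m i h x * Gam s j k x * c s m x
        = \sum_m \sum_s Gam m j k x * Gam s i h x * c m s x.
  by rewrite swap; apply: eq_bigr => m _; apply: eq_bigr => s _; ring.
have -> : \sum_m \sum_s Gam m j h x * Gam s i k x * c s m x
        = \sum_m \sum_s Gam m i k x * Gam s j h x * c m s x.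
  by rewrite swap; apply: eq_bigr => m _; apply: eq_bigr => s _; ring.
rewrite (pd_c_comm j k h i).
ring.
Qed.

Lemma cov3_christoffel_c_skew i j k h :
  cov3 christoffel_c i j k h x - cov3 christoffel_c j i k h x =
  2^-1 * (covcc Gam c i k j h x - covcc Gam c i h j k x
          - (covcc Gam c j k i h x - covcc Gam c j h i k x)
          - \sum_(m < n) Rcomp Gam i j k m x * c m h x
          - \sum_(m < n) Rcomp Gam i j h m x * c k m x).
Proof.
have -> : \sum_(m < n) Rcomp Gam i j k m x * c m h x
    = - (covcc Gam c i j k h x - covcc Gam c j i k h x)
      - \sum_(m < n) Rcomp Gam i j h m x * c k m x.
  by rewrite ricci_identity; ring.
by rewrite !cov3_christoffel_c; ring.
Qed.

End CovariantDerivatives.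

Lemma derive_lsubmx (R : realType) (m n : nat) (psi : 'rV[R]_m -> R)
    (z v : 'rV[R]_(m + n)) :
  derive (fun w => psi (lsubmx w)) z v = derive psi (lsubmx z) (lsubmx v).
Proof.
rewrite /derive.
suff -> : (fun h : R =>
             h^-1 *: (((fun w => psi (lsubmx w)) \o shift z) (h *: v) - psi (lsubmx z)))
  = fun h => h^-1 *: ((psi \o shift (lsubmx z)) (h *: lsubmx v) - psi (lsubmx z)) by [].
apply: funext => h /=; congr (_ *: (psi _ - _)).
by apply/matrixP => i j; rewrite !mxE.
Qed.

Lemma split_lshift (m n : nat) (i : 'I_m) : fintype.split (lshift n i) = inl i.
Proof. exact: (unsplitK (inl i)). Qed.

Lemma split_rshift (m n : nat) (i : 'I_n) : fintype.split (rshift m i) = inr i.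
Proof. exact: (unsplitK (inr i)). Qed.

Section AdaptedFrame.
Variables (R : realType) (n : nat) (Gam : 'I_n -> 'I_n -> 'I_n -> 'rV[R]_n -> R).
Local Notation E := (Efield Gam).

Lemma adapted_unit z : adapted Gam z \in unitmx.
Proof. by rewrite unitmxE /adapted det_ublock !det1 mulr1 unitr1. Qed.

Lemma adapted_lshift z a (l : 'I_n) :
  adapted Gam z a (lshift n l) = (a == lshift n l)%:R.
Proof.
case: (split_ordP a) => [i ->|j ->]; rewrite /adapted.
  by rewrite block_mxEul mxE eq_lshift.
by rewrite block_mxEdl mxE eq_rlshift.
Qed.

Lemma pd_lshift_base (psi : 'rV[R]_n -> R) l z :
  pd (lshift n l) (fun w : 'rV[R]_(n + n) => psi (lsubmx w)) z = pd l psi (lsubmx z).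
Proof.
rewrite /pd derive_lsubmx; congr (derive _ _ _).
by apply/rowP => j; rewrite !mxE eq_lshift.
Qed.

Lemma pd_rshift_base (psi : 'rV[R]_n -> R) l z :
  pd (rshift n l) (fun w : 'rV[R]_(n + n) => psi (lsubmx w)) z = 0.
Proof.
rewrite /pd derive_lsubmx.
have -> : lsubmx (delta_mx 0 (rshift n l) : 'rV[R]_(n + n)) = 0.
  by apply/rowP => j; rewrite !mxE eq_lrshift andbF.
exact: derive0.
Qed.

Lemma vder_lshift_base (i : 'I_n) (psi : 'rV[R]_n -> R) z :
  vder (E (lshift n i)) (fun w => psi (lsubmx w)) z = pd i psi (lsubmx z).
Proof.
rewrite /vder big_split_ord /= [X in _ + X]big1 ?addr0; last first.
  by move=> l _; rewrite pd_rshift_base mulr0.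
rewrite (bigD1 i) //= [X in _ + X]big1 ?addr0.
  by rewrite /Efield mxE adapted_lshift eqxx mul1r pd_lshift_base.
by move=> l /negbTE nli; rewrite /Efield mxE adapted_lshift eq_lshift eq_sym nli mul0r.
Qed.

Lemma vder_rshift_base (j : 'I_n) (psi : 'rV[R]_n -> R) z :
  vder (E (rshift n j)) (fun w => psi (lsubmx w)) z = 0.
Proof.
rewrite /vder big_split_ord /= [X in _ + X]big1 ?addr0; last first.
  by move=> l _; rewrite pd_rshift_base mulr0.
by apply: big1 => l _; rewrite /Efield mxE adapted_lshift eq_rlshift mul0r.
Qed.

(* The horizontal components of the E_a are constant, so brackets are vertical. *)
Lemma frame_comp_lie_lshift a b z (l : 'I_n) :
  frame_comp (adapted Gam) (lie (E a) (E b)) z 0 (lshift n l) = 0.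
Proof.
set u := frame_comp _ _ z.
have u_lie : u *m adapted Gam z = lie (E a) (E b) z.
  by rewrite /u /frame_comp mulmxKV // adapted_unit.
clearbody u.
have Ecol e : (fun y => E e y 0 (lshift n l)) = fun _ => (e == lshift n l)%:R.
  by apply: funext => y; rewrite /Efield mxE adapted_lshift.
move/(congr1 (fun M : 'rV[R]_(n + n) => M 0 (lshift n l))): u_lie.
rewrite /= /lie !mxE !Ecol !vder_cst subrr (bigD1 (lshift n l)) //=.
rewrite adapted_lshift eqxx mulr1 big1 ?addr0 // => e /negbTE ne.
by rewrite adapted_lshift ne mulr0.
Qed.

End AdaptedFrame.

Section LiftedConnection.
Variables (R : realType) (n : nat) (Gam : 'I_n -> 'I_n -> 'I_n -> 'rV[R]_n -> R)
  (c : 'I_n -> 'I_n -> 'rV[R]_n -> R).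
Local Notation E := (Efield Gam).
Local Notation C := (christoffel_c Gam c).

(* [Omt] only reads the base point of its argument, so the zero covector will do. *)
Definition Omt_base (a b d : 'I_(n + n)) (x : 'rV[R]_n) : R :=
  Omt Gam c a b d (row_mx x 0).

Lemma Omt_lsubmx : Omt Gam c = fun a b d z => Omt_base a b d (lsubmx z).
Proof. by do 4!apply: funext => ?; rewrite /Omt_base /Omt row_mxKl. Qed.

Lemma Omt_base_rshift i b d : Omt_base (rshift n i) b d = fun _ => 0.
Proof. by apply: funext => x; rewrite /Omt_base /Omt split_rshift. Qed.

Lemma Omt_base_lll i j h : Omt_base (lshift n i) (lshift n j) (lshift n h) = Gam h i j.
Proof. by apply: funext => x; rewrite /Omt_base /Omt row_mxKl !split_lshift. Qed.

Lemma Omt_base_llr i j h : Omt_base (lshift n i) (lshift n j) (rshift n h) = C i j h.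
Proof.
by apply: funext => x; rewrite /Omt_base /Omt row_mxKl !split_lshift split_rshift.
Qed.

Lemma Omt_base_lrl i j h : Omt_base (lshift n i) (rshift n j) (lshift n h) = fun _ => 0.
Proof. by apply: funext => x; rewrite /Omt_base /Omt !split_lshift split_rshift. Qed.

Lemma Omt_base_lrr i j h :
  Omt_base (lshift n i) (rshift n j) (rshift n h) = fun x => - Gam j i h x.
Proof.
by apply: funext => x; rewrite /Omt_base /Omt row_mxKl split_lshift !split_rshift.
Qed.

Definition Omt_baseE :=
  (Omt_base_rshift, Omt_base_lll, Omt_base_llr, Omt_base_lrl, Omt_base_lrr).

Definition Rt_coef (a b k d : 'I_(n + n)) (z : 'rV[R]_(n + n)) : R :=
  vder (E a) (fun w => Omt_base b k d (lsubmx w)) z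
  - vder (E b) (fun w => Omt_base a k d (lsubmx w)) z
  + \sum_e (Omt_base b k e (lsubmx z) * Omt_base a e d (lsubmx z)
            - Omt_base a k e (lsubmx z) * Omt_base b e d (lsubmx z)).

Lemma Rt_frame a b k z :
  Rt Gam c (E a) (E b) (E k) z = \sum_d Rt_coef a b k d z *: E d z.
Proof.
rewrite /Rt Omt_lsubmx (curv_frame_vec _ (@adapted_unit _ _ Gam)).
rewrite (cov_frame_vec _ (@adapted_unit _ _ Gam)) [X in _ - X]big1 ?subr0 //.
move=> e _; apply: big1 => d _; case: (split_ordP e) => [i ->|j ->].
  by rewrite frame_comp_lie_lshift mul0r scale0r.
by rewrite Omt_base_rshift mulr0 scale0r.
Qed.

Lemma Rt_coef_rshift_l i b k d z : Rt_coef (rshift n i) b k d z = 0.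
Proof.
rewrite /Rt_coef vder_rshift_base big1 ?addr0; last first.
  by move=> e _; rewrite !Omt_base_rshift mulr0 mul0r subrr.
by rewrite Omt_base_rshift vder_cst subrr.
Qed.

Lemma Rt_coef_lshift_rshift i j k d z : Rt_coef (lshift n i) (rshift n j) k d z = 0.
Proof.
rewrite /Rt_coef vder_rshift_base big1 ?addr0; last first.
  by move=> e _; rewrite !Omt_base_rshift mulr0 mul0r subrr.
by rewrite Omt_base_rshift vder_cst subrr.
Qed.

Lemma Rt_coef_llr_lshift i j k h z :
  Rt_coef (lshift n i) (lshift n j) (rshift n k) (lshift n h) z = 0.
Proof.
rewrite /Rt_coef !vder_lshift_base !Omt_baseE /pd !derive_cst subrr add0r.
rewrite big_split_ord /= !big1 ?addr0 // => s _; rewrite !Omt_baseE.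
- by rewrite !mulr0 subrr.
- by rewrite !mul0r subrr.
Qed.

Lemma Rt_coef_lll_lshift i j k h z :
  Rt_coef (lshift n i) (lshift n j) (lshift n k) (lshift n h) z
    = Rcomp Gam i j k h (lsubmx z).
Proof.
rewrite /Rt_coef !vder_lshift_base !Omt_baseE RcompE big_split_ord /=.
rewrite [X in _ + (_ + X)]big1 ?addr0 => [|s _]; last by rewrite !Omt_baseE !mulr0 subrr.
by congr (_ + _); apply: eq_bigr => s _; rewrite !Omt_baseE.
Qed.

Lemma Rt_coef_lll_rshift i j k h z :
  (forall m a b, Gam m a b (lsubmx z) = Gam m b a (lsubmx z)) ->
  Rt_coef (lshift n i) (lshift n j) (lshift n k) (rshift n h) z
    = cov3 Gam C i j k h (lsubmx z) - cov3 Gam C j i k h (lsubmx z).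
Proof.
move=> Gam_sym; rewrite /Rt_coef !vder_lshift_base !Omt_baseE cov3_skew //.
rewrite big_split_ord /=.
by congr (_ + (_ + _)); apply: eq_bigr => s _; rewrite !Omt_baseE.
Qed.

Lemma Rt_coef_llr_rshift i j k h z :
  (forall m a b l, derivable (Gam m a b) (lsubmx z) (delta_mx 0 l)) ->
  Rt_coef (lshift n i) (lshift n j) (rshift n k) (rshift n h) z
    = Rcomp Gam j i h k (lsubmx z).
Proof.
move=> dGam; rewrite /Rt_coef !vder_lshift_base !Omt_baseE !pdN // RcompE.
rewrite big_split_ord /= big1 ?add0r => [|s _]; last by rewrite !Omt_baseE !mul0r subrr.
rewrite opprK [- pd i _ _ + _]addrC; congr (_ + _); apply: eq_bigr => s _.
by rewrite !Omt_baseE mulrNN mulrNN mulrC [Gam k i s _ * _]mulrC.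
Qed.

End LiftedConnection.

Theorem proposition4 (R : realType) (n : nat) (U : set 'rV[R]_n)
    (Gam : 'I_n -> 'I_n -> 'I_n -> 'rV[R]_n -> R)
    (c : 'I_n -> 'I_n -> 'rV[R]_n -> R) :
  open U ->
  (forall h i j, smooth U (Gam h i j)) ->
  (forall i j, smooth U (c i j)) ->
  (forall h i j x, U x -> Gam h i j x = Gam h j i x) ->
  (forall i j x, U x -> c i j x = c j i x) ->
  forall z : 'rV[R]_(n + n), U (lsubmx z) ->
  let x := lsubmx z in
  let E := Efield Gam in
  let Rt := Rt Gam c in
  (forall i j k : 'I_n,
     Rt (E (lshift n i)) (E (lshift n j)) (E (lshift n k)) z =
       \sum_(h < n) Rcomp Gam i j k h x *: E (lshift n h) z
     + \sum_(h < n)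
         (2^-1 * (covcc Gam c i k j h x - covcc Gam c i h j k x
                  - (covcc Gam c j k i h x - covcc Gam c j h i k x)
                  - \sum_(m < n) Rcomp Gam i j k m x * c m h x
                  - \sum_(m < n) Rcomp Gam i j h m x * c k m x))
           *: E (rshift n h) z) /\
  (forall i j k : 'I_n,
     Rt (E (lshift n i)) (E (lshift n j)) (E (rshift n k)) z =
       \sum_(h < n) Rcomp Gam j i h k x *: E (rshift n h) z) /\
  (forall i j k : 'I_n,
     (Rt (E (lshift n i)) (E (rshift n j)) (E (lshift n k)) z = 0 /\
         Rt (E (lshift n i)) (E (rshift n j)) (E (rshift n k)) z = 0 /\
         Rt (E (rshift n i)) (E (lshift n j)) (E (lshift n k)) z = 0 /\
         Rt (E (rshift n i)) (E (lshift n j)) (E (rshift n k)) z = 0 /\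
         Rt (E (rshift n i)) (E (rshift n j)) (E (lshift n k)) z = 0 /\
         Rt (E (rshift n i)) (E (rshift n j)) (E (rshift n k)) z = 0)).
Proof.
move=> oU Gam_smooth c_smooth Gam_sym _ z Uz x E Rt'.
rewrite {}/Rt' {}/E {}/x.
have dGam m a b l : derivable (Gam m a b) (lsubmx z) (delta_mx 0 l).
  exact: (smooth_derivable (Gam_smooth m a b) Uz).
have dc a b l : derivable (c a b) (lsubmx z) (delta_mx 0 l).
  exact: (smooth_derivable (c_smooth a b) Uz).
have ddc a b e l : derivable (pd a (c b e)) (lsubmx z) (delta_mx 0 l).
  exact: (smooth_derivable (smooth_pd (c_smooth b e) a) Uz).
have Gsym m a b : Gam m a b (lsubmx z) = Gam m b a (lsubmx z) by exact: Gam_sym.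
have pd_c_comm a b e l : pd l (pd a (c b e)) (lsubmx z) = pd a (pd l (c b e)) (lsubmx z).
  exact: smooth_pd_comm oU (c_smooth b e) Uz.
split; [|split] => i j k.
- rewrite Rt_frame big_split_ord /=; congr (_ + _); apply: eq_bigr => h _.
    by rewrite Rt_coef_lll_lshift.
  by rewrite Rt_coef_lll_rshift // (cov3_christoffel_c_skew dGam dc ddc Gsym pd_c_comm).
- rewrite Rt_frame big_split_ord /= big1 ?add0r; last first.
    by move=> h _; rewrite Rt_coef_llr_lshift scale0r.
  by apply: eq_bigr => h _; rewrite (Rt_coef_llr_rshift _ _ _ _ _ dGam).
- by rewrite !Rt_frame; do !split; apply: big1 => d _;
    rewrite ?Rt_coef_rshift_l ?Rt_coef_lshift_rshift scale0r.
Qed.
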